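(* Let $\mathcal{G}^{\mathbb{c}}=(\mathbb{C},\mathbb{E}^{\mathbb{c}})$ be a C-DMG and let $\mathbb{C}_\mathbb{X},\mathbb{C}_\mathbb{Y},\mathbb{C}_\mathbb{W}$ be pairwise disjoint subsets of $\mathbb{C}$. If $\mathbb{C}_\mathbb{X}$ and $\mathbb{C}_\mathbb{Y}$ are d-separated by $\mathbb{C}_\mathbb{W}$ in $\mathcal{G}^{\mathbb{c}}$, then in every ADMG $\mathcal{G}=(\mathbb{V},\mathbb{E})$ compatible with $\mathcal{G}^{\mathbb{c}}$, the sets $\mathbb{X}=\bigcup_{C\in\mathbb{C}_\mathbb{X}}C$ and $\mathbb{Y}=\bigcup_{C\in\mathbb{C}_\mathbb{Y}}C$ are d-separated by $\mathbb{W}=\bigcup_{C\in\mathbb{C}_\mathbb{W}}C$ in $\mathcal{G}$.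
   Context: An ADMG $\mathcal{G}=(\mathbb{V},\mathbb{E})$ is a graph on a finite vertex set $\mathbb{V}$ whose edges are directed edges $X\rightarrow Y$ and bidirected edges $X\leftrightarrow Y$, such that the directed edges form no directed cycle. A C-DMG $\mathcal{G}^{\mathbb{c}}=(\mathbb{C},\mathbb{E}^{\mathbb{c}})$ compatible with an ADMG $\mathcal{G}=(\mathbb{V},\mathbb{E})$ is the graph whose vertex set $\mathbb{C}=\{C_1,\dots,C_k\}$ is a partition of $\mathbb{V}$ (each vertex $C_i$ is a cluster of variables) and in which, for all $C_i,C_j\in\mathbb{C}$ (possibly $i=j$), $C_i\rightarrow C_j$ (resp. $C_i\leftrightarrow C_j$) is an edge iff there exist $X\in C_i$, $Y\in C_j$ with $X\rightarrow Y$ (resp. $X\leftrightarrow Y$) in $\mathbb{E}$; an ADMG is compatible with a C-DMG if the C-DMG arises from it in this way. A C-DMG may contain directed cycles and self-loops. In a graph $\mathcal{G}^*$ (ADMG or C-DMG), $\mathrm{De}(V)$ denotes the descendants of $V$ (vertices reachable by a directed path from $V$, including $V$ itself). A walk $\langle V_1,\dots,V_n\rangle$ (consecutive vertices joined by a specified edge) is blocked by a set $\mathbb{W}^*$ if (1) $V_1\in\mathbb{W}^*$ or $V_n\in\mathbb{W}^*$; or (2) for some $1<i<n$, the walk contains $V_{i-1}\,*\!-\!*\,V_i\rightarrow V_{i+1}$ or $V_{i-1}\leftarrow V_i\,*\!-\!*\,V_{i+1}$ (where $*\!-\!*$ is any edge type) and $V_i\in\mathbb{W}^*$; or (3) for some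 $1<i<n$, the walk contains $V_{i-1}\,*\!\!\rightarrow V_i\leftarrow\!\!*\,V_{i+1}$ (each of these two edges being either directed into $V_i$ or bidirected) and $\mathrm{De}(V_i)\cap\mathbb{W}^*=\emptyset$. A walk that is not blocked is active. A path is a walk with no repeated vertex. For disjoint vertex sets, $\mathbb{W}^*$ d-separates $\mathbb{X}^*$ and $\mathbb{Y}^*$ if it blocks every path from a vertex of $\mathbb{X}^*$ to a vertex of $\mathbb{Y}^*$. *)

From mathcomp Require Import all_boot.
Set Implicit Arguments. Unset Strict Implicit. Unset Printing Implicit Defensive.

(* Kind of the edge between consecutive vertices u, v of a walk:
   Fwd : u -> v,   Bwd : u <- v,   Bi : u <-> v. *)
Inductive ekind := Fwd | Bwd | Bi.

Section MixedGraphs.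
Variable V : finType.
Variables (dir bi : rel V). (* dir x y : x -> y ;  bi x y : x <-> y *)

Definition edge_ok (x : V) (k : ekind) (y : V) : bool :=
  match k with Fwd => dir x y | Bwd => dir y x | Bi => bi x y end.

Fixpoint is_walk (x : V) (s : seq (ekind * V)) : bool :=
  match s with
  | [::] => true
  | (k, y) :: s' => edge_ok x k y && is_walk y s'
  end.

Definition walk_verts (x : V) (s : seq (ekind * V)) : seq V := x :: map snd s.
Definition walk_end (x : V) (s : seq (ekind * V)) : V := last x (map snd s).

Definition is_path (x : V) (s : seq (ekind * V)) : bool :=
  is_walk x s && uniq (walk_verts x s).

Definition De (v : V) : {set V} := [set w | connect dir v w].

(* the edge entering V_i (from V_{i-1}) has an arrowhead at V_i *)
Definition head_in (k : ekind) : bool :=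
  match k with Fwd => true | Bwd => false | Bi => true end.
(* the edge leaving V_i (to V_{i+1}) has an arrowhead at V_i *)
Definition head_out (k : ekind) : bool :=
  match k with Fwd => false | Bwd => true | Bi => true end.
(* edge V_i -> V_{i+1} *)
Definition tail_out (k : ekind) : bool := match k with Fwd => true | _ => false end.
(* edge V_{i-1} <- V_i *)
Definition tail_in (k : ekind) : bool := match k with Bwd => true | _ => false end.

Definition blocked_at (W : {set V}) (k1 : ekind) (y : V) (k2 : ekind) : bool :=
  ((tail_out k2 || tail_in k1) && (y \in W))
  || (head_in k1 && head_out k2 && [disjoint De y & W]).

Fixpoint interior_blocked (W : {set V}) (s : seq (ekind * V)) : bool :=
  match s with
  | (k1, y) :: (((k2, _) :: _) as s') =>
      blocked_at W k1 y k2 || interior_blocked W s'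
  | _ => false
  end.

Definition walk_blocked (W : {set V}) (x : V) (s : seq (ekind * V)) : bool :=
  [|| x \in W, walk_end x s \in W | interior_blocked W s].

Definition dsep (X Y W : {set V}) : Prop :=
  forall (x : V) (s : seq (ekind * V)),
    is_path x s -> x \in X -> walk_end x s \in Y -> walk_blocked W x s.

Definition is_ADMG : Prop :=
  symmetric bi /\ (forall x y, dir x y -> ~~ connect dir y x).
End MixedGraphs.

(* The mixed graph (dirC, biC) on clusters C is the C-DMG induced by the
   ADMG (dir, bi) on V via the partition given by the surjective cluster map cl. *)
Definition compatible (V C : finType) (dir bi : rel V) (cl : V -> C)
  (dirC biC : rel C) : Prop :=
  (forall c : C, exists v, cl v = c) /\
  (forall c d : C, dirC c d = [exists x, exists y, [&& cl x == c, cl y == d & dir x y]]) /\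
  (forall c d : C, biC c d = [exists x, exists y, [&& cl x == c, cl y == d & bi x y]]).

From mathcomp Require Import all_boot zify.
Set Implicit Arguments. Unset Strict Implicit. Unset Printing Implicit Defensive.

(* Mapping every vertex to its cluster turns a walk of G into a walk of the
   C-DMG with the same edge kinds, and a vertex blocking the image walk also
   blocks the original one, since descendants map to descendants.  Hence an
   active path of G between X and Y yields an active walk of the C-DMG between
   CX and CY.  Cutting out loops turns an active walk into an active path with
   the same endpoints: when the spliced vertex v becomes a collider outside W,
   the discarded loop leaves v along directed edges up to a collider whose
   descendants meet W. *)

Lemma mem_map_split (T : Type) (U : eqType) (f : T -> U) (s : seq T) u :
  u \in map f s -> exists s1 a s2, s = s1 ++ a :: s2 /\ u = f a.
Proof.
elim: s => [|a s IH] //=; rewrite inE => /orP[/eqP ->|/IH[s1 [b [s2 [-> ->]]]]].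
  by exists [::], a, s.
by exists (a :: s1), b, s2.
Qed.

Lemma not_uniq_map_split (T : Type) (U : eqType) (f : T -> U) (s : seq T) :
  ~~ uniq (map f s) ->
  exists s1 a s2 b s3, s = s1 ++ a :: s2 ++ b :: s3 /\ f a = f b.
Proof.
elim: s => [|a s IH] //=; rewrite negb_and negbK => /orP[].
  by case/mem_map_split => s2 [b [s3 [-> fab]]]; exists [::], a, s2, b, s3.
by case/IH => s1 [b [s2 [c [s3 [-> fbc]]]]]; exists (a :: s1), b, s2, c, s3.
Qed.

Section WalkShortening.
Variables (V : finType) (dir bi : rel V) (W : {set V}).
Notation interior_blocked := (interior_blocked dir W).
Notation blocked_at := (blocked_at dir W).
Notation De := (De dir).

Lemma interior_blocked_cons e s : interior_blocked s -> interior_blocked (e :: s).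
Proof. by case: e => k y; case: s => // [[k2 y2] s] /= ->; rewrite orbT. Qed.

Lemma interior_blocked_cat s1 e s2 :
  interior_blocked (s1 ++ e :: s2) =
  interior_blocked (rcons s1 e) || interior_blocked (e :: s2).
Proof.
case: e => ke ye; elim: s1 => [|[k y] s1 IH] //.
by case: s1 IH => [|[k2 y2] s1] /= IH; rewrite ?orbF // IH orbA.
Qed.

Lemma is_walk_cat x s1 s2 :
  is_walk dir bi x (s1 ++ s2) =
  is_walk dir bi x s1 && is_walk dir bi (walk_end x s1) s2.
Proof. by elim: s1 x => [|[k y] s1 IH] x //=; rewrite IH andbA. Qed.

Lemma walk_end_cat (x : V) s1 s2 :
  walk_end x (s1 ++ s2) = walk_end (walk_end x s1) s2.
Proof. by rewrite /walk_end map_cat last_cat. Qed.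

Lemma walk_end_cons (x : V) e s : walk_end x (e :: s) = walk_end e.2 s.
Proof. by []. Qed.

Lemma De_meets_connect y z :
  connect dir y z -> ~~ [disjoint De z & W] -> ~~ [disjoint De y & W].
Proof.
move=> yz; apply: contra; apply: disjointWl; apply/subsetP => w.
by rewrite !inE; apply: connect_trans.
Qed.

(* The first step of t that is not of the form u -> u' makes u a collider, and
   u is a descendant of y. *)
Lemma arrowheads_unblocked_De k y t kf z u :
  is_walk dir bi y t -> head_in k -> head_out kf ->
  ~~ interior_blocked ((k, y) :: t ++ (kf, z) :: u) -> ~~ [disjoint De y & W].
Proof.
elim: t y k => [|[k' y'] t IH] y k /=; rewrite /blocked_at.
  by move=> _ -> -> /norP[/norP[_ /=]].
case/andP => yy' walk_t -> kf_out /norP[not_blocked_y unblocked_t].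
case: k' yy' not_blocked_y unblocked_t => /= yy' not_blocked_y unblocked_t.
- exact: De_meets_connect (connect1 yy') (IH y' Fwd walk_t isT kf_out unblocked_t).
- by case/norP: not_blocked_y.
- by case/norP: not_blocked_y.
Qed.

Lemma blocked_at_splice ka v k' kb k3 :
  ~~ blocked_at ka v k' -> ~~ blocked_at kb v k3 ->
  (head_in ka -> head_out k3 -> ~~ [disjoint De v & W]) ->
  ~~ blocked_at ka v k3.
Proof.
rewrite /blocked_at; case: (v \in W); case: [disjoint De v & W];
by case: ka; case: k'; case: kb; case: k3 => //= _ _ /(_ isT isT).
Qed.

Lemma interior_unblocked_splice s1 ka v s2 kb s3 :
  is_walk dir bi v (rcons s2 (kb, v)) ->
  ~~ interior_blocked (s1 ++ (ka, v) :: s2 ++ (kb, v) :: s3) ->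
  ~~ interior_blocked (s1 ++ (ka, v) :: s3).
Proof.
move=> walk_loop; rewrite !(interior_blocked_cat s1) => /norP[/negbTE ->].
case: s3 => [|[k3 z] s4] // unblocked.
have [k' not_blocked_first] : exists k', ~~ blocked_at ka v k'.
  by case: s2 {walk_loop} unblocked => [|[k y] s2] /= /norP[];
     [exists kb | exists k].
move: (unblocked); rewrite (interior_blocked_cat ((ka, v) :: s2)) /=.
move=> /norP[_ /norP[not_blocked_second /negbTE ->]]; rewrite orbF.
apply: (blocked_at_splice not_blocked_first not_blocked_second).
move=> ka_in k3_out; apply: (arrowheads_unblocked_De walk_loop ka_in k3_out).
by rewrite cat_rcons; apply: unblocked.
Qed.

Lemma is_walk_cut_loop x s1 ka v s2 kb s3 :
  is_walk dir bi x (s1 ++ (ka, v) :: s2 ++ (kb, v) :: s3) ->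
  is_walk dir bi x (s1 ++ (ka, v) :: s3) /\ is_walk dir bi v (rcons s2 (kb, v)).
Proof.
rewrite !is_walk_cat /= -cats1 !is_walk_cat /= andbT.
by case/and5P => -> -> -> -> ->.
Qed.

Lemma unblocked_walk_to_path x s :
  is_walk dir bi x s -> ~~ interior_blocked s ->
  exists s', [/\ is_path dir bi x s', walk_end x s' = walk_end x s
                & ~~ interior_blocked s'].
Proof.
have [n] := ubnP (size s); elim: n x s => // n IH x s.
case: (boolP (uniq (walk_verts x s))) => [uniq_s _ walk_s unblocked | repeat].
  by exists s; split=> //; rewrite /is_path walk_s.
(* walk_verts x s lists the targets of s preceded by a dummy step into x *)
have [s1 [[ka v] [s2 [[kb v'] [s3 [eq_s /= eq_v]]]]]] :=
  not_uniq_map_split (repeat : ~~ uniq (map snd ((Fwd, x) :: s))).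
subst v'; case: s1 eq_s => [|e s1] /=.
- case=> _ <- -> {repeat}; rewrite size_cat /= => size_s.
  rewrite is_walk_cat /= => /and3P[_ _ walk_s3] unblocked.
  have [||s' [path_s' end_s' unblocked_s']] := IH x s3 _ walk_s3.
  + by move: size_s; lia.
  + apply: contra unblocked => blocked_s3.
    by rewrite interior_blocked_cat interior_blocked_cons ?orbT.
  by exists s'; rewrite end_s' walk_end_cat.
- case=> _ -> {repeat}; rewrite !size_cat /= size_cat /= => size_s.
  case/is_walk_cut_loop => walk_cut walk_loop unblocked.
  have [||s' [path_s' end_s' unblocked_s']] := IH x _ _ walk_cut.
  + by rewrite size_cat /=; lia.
  + exact: interior_unblocked_splice unblocked.
  by exists s'; rewrite end_s' !(walk_end_cat, walk_end_cons).
Qed.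
End WalkShortening.

Section ClusterMap.
Variables (V C : finType) (dir bi : rel V) (dirC biC : rel C) (cl : V -> C).
Hypothesis dir_hom : forall x y, dir x y -> dirC (cl x) (cl y).
Hypothesis bi_hom : forall x y, bi x y -> biC (cl x) (cl y).
Variable CW : {set C}.

Definition map_step (e : ekind * V) : ekind * C := (e.1, cl e.2).

Lemma is_walk_map x s :
  is_walk dir bi x s -> is_walk dirC biC (cl x) (map map_step s).
Proof.
elim: s x => [|[k y] s IH] x //= /andP[xy walk_s]; rewrite IH // andbT.
by case: k xy => /=; [apply: dir_hom | apply: dir_hom | apply: bi_hom].
Qed.

Lemma walk_end_map x s : walk_end (cl x) (map map_step s) = cl (walk_end x s).
Proof. by rewrite /walk_end -map_comp (map_comp cl snd) last_map. Qed.

Lemma connect_map x y : connect dir x y -> connect dirC (cl x) (cl y).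
Proof.
case/connectP => p + ->; elim: p x => [|z p IH] x //= /andP[xz walk_p].
exact: connect_trans (connect1 (dir_hom xz)) (IH z walk_p).
Qed.

Lemma disjoint_De_preimage y :
  [disjoint De dirC (cl y) & CW] -> [disjoint De dir y & cl @^-1: CW].
Proof.
rewrite !disjoint_subset => /subsetP sub; apply/subsetP => z.
by rewrite !inE => yz; apply: (sub (cl z)); rewrite inE connect_map.
Qed.

Lemma blocked_at_map k1 y k2 :
  blocked_at dirC CW k1 (cl y) k2 -> blocked_at dir (cl @^-1: CW) k1 y k2.
Proof.
rewrite /blocked_at inE => /orP[-> //|/andP[-> /disjoint_De_preimage ->]].
by rewrite orbT.
Qed.

Lemma interior_blocked_map s :
  interior_blocked dirC CW (map map_step s) -> interior_blocked dir (cl @^-1: CW) s.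
Proof.
elim: s => [|[k y] s IH] //; case: s IH => [|[k2 y2] s] // IH.
case/orP => [/blocked_at_map blocked_y | /IH]; last exact: interior_blocked_cons.
by rewrite /= blocked_y.
Qed.
End ClusterMap.

Lemma compatible_hom (V C : finType) (dir bi : rel V) (cl : V -> C)
  (dirC biC : rel C) :
  compatible dir bi cl dirC biC ->
  (forall x y, dir x y -> dirC (cl x) (cl y)) /\
  (forall x y, bi x y -> biC (cl x) (cl y)).
Proof.
case=> _ [dirC_def biC_def]; split=> x y xy;
by rewrite ?dirC_def ?biC_def; apply/existsP; exists x; apply/existsP; exists y;
   rewrite !eqxx.
Qed.

Theorem theorem1 (C : finType) (dirC biC : rel C) (CX CY CW : {set C}) :
  [disjoint CX & CY] -> [disjoint CX & CW] -> [disjoint CY & CW] ->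
  dsep dirC biC CX CY CW ->
  forall (V : finType) (dir bi : rel V) (cl : V -> C),
    is_ADMG dir bi -> compatible dir bi cl dirC biC ->
    dsep dir bi (cl @^-1: CX) (cl @^-1: CY) (cl @^-1: CW).
Proof.
move=> _ _ _ sepC V dir bi cl _ /compatible_hom[dir_hom bi_hom].
move=> x s /andP[walk_s _]; rewrite !inE => xX endY.
apply/negPn/negP; rewrite /walk_blocked !inE => /norP[xW /norP[endW unblocked]].
have unblockedC : ~~ interior_blocked dirC CW (map (map_step cl) s).
  by apply: contra unblocked; apply: interior_blocked_map.
have [s' [path_s' end_s' unblocked_s']] :=
  unblocked_walk_to_path (is_walk_map dir_hom bi_hom walk_s) unblockedC.
have := sepC _ _ path_s' xX; rewrite end_s' walk_end_map => /(_ endY).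
by rewrite /walk_blocked end_s' walk_end_map (negbTE xW) (negbTE endW)
  (negbTE unblocked_s').
Qed.
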